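(* Let $\mathcal{H}$ be a real separable Hilbert space, let $0<r<1$, let $m,m_0\in\mathcal{H}$, and let $C,C_0$ be self-adjoint, compact, positive operators on $\mathcal{H}$. Then $$\lim_{\gamma\to0^+}\langle m-m_0,[(1-r)(C+\gamma I)+r(C_0+\gamma I)]^{-1}(m-m_0)\rangle=\begin{cases}\|[(1-r)C+rC_0]^{-1/2}(m-m_0)\|^2 & \text{if } m-m_0\in\mathrm{Im}\big([(1-r)C+rC_0]^{1/2}\big),\\ \infty & \text{otherwise}.\end{cases}$$ In particular, $\|[(1-r)C+rC_0]^{-1/2}(m-m_0)\|^2<\infty$ whenever $m-m_0\in\mathrm{Im}(C_0^{1/2})$.
   Context: For a self-adjoint positive compact operator $T$ and $y\in\mathrm{Im}(T^{1/2})$, $T^{-1/2}y$ denotes the unique preimage of $y$ under $T^{1/2}$ lying in $\ker(T)^{\perp}$ (when $\ker T=\{0\}$ this is simply the unique preimage). *)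

From HB Require Import structures.
From mathcomp Require Import all_boot all_order all_algebra.
From mathcomp Require Import all_classical all_reals all_analysis.
Set Implicit Arguments. Unset Strict Implicit. Unset Printing Implicit Defensive.
Import Order.TTheory GRing.Theory Num.Theory.
Import numFieldNormedType.Exports.
Local Open Scope classical_set_scope.
Local Open Scope ring_scope.

(* A real Hilbert space is modelled as a complete normed space V over a
   real field R together with a real inner product ip inducing the norm. *)
Definition is_inner_product (R : realType) (V : completeNormedModType R)
  (ip : V -> V -> R) : Prop :=
  [/\ forall (a : R) (x y z : V), ip (a *: x + y) z = a * ip x z + ip y z,
      forall x y : V, ip x y = ip y x
    & forall x : V, ip x x = `|x| ^+ 2].

Definition separable (R : realType) (V : completeNormedModType R) : Prop :=
  exists D : set V, countable D /\ closure D = setT.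

Definition linear_op (R : realType) (V : completeNormedModType R) (T : V -> V)
  : Prop := forall (a : R) (x y : V), T (a *: x + y) = a *: T x + T y.

Definition compact_op (R : realType) (V : completeNormedModType R) (T : V -> V)
  : Prop := linear_op T /\ compact (closure (T @` [set x : V | `|x| <= 1])).

Definition self_adjoint (R : realType) (V : completeNormedModType R)
  (ip : V -> V -> R) (T : V -> V) : Prop := forall x y, ip (T x) y = ip x (T y).

Definition positive_op (R : realType) (V : completeNormedModType R)
  (ip : V -> V -> R) (T : V -> V) : Prop := forall x, 0 <= ip (T x) x.

Definition is_pos_sqrt (R : realType) (V : completeNormedModType R)
  (ip : V -> V -> R) (T S : V -> V) : Prop :=
  [/\ linear_op S, continuous S, self_adjoint ip S, positive_op ip S
    & forall x, S (S x) = T x].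

(* <v, A^{-1} v>, where A^{-1} v is the (unique, when A is invertible)
   solution x of A x = v *)
Definition quad_inv (R : realType) (V : completeNormedModType R)
  (ip : V -> V -> R) (A : V -> V) (v : V) : R :=
  ip v (xget 0 [set x | A x = v]).

From HB Require Import structures.
From mathcomp Require Import all_boot all_order all_algebra.
From mathcomp Require Import all_classical all_reals all_analysis.
From mathcomp Require Import ring lra.
Import Order.TTheory GRing.Theory Num.Theory.
Import numFieldNormedType.Exports.
Local Open Scope classical_set_scope.
Local Open Scope ring_scope.

(* Write v := m - m0 and A := (1 - r) C + r C0 = S ^ 2; the regularised
   operator is then S ^ 2 + g, and the quantity to study is
   Q g = <v, (S ^ 2 + g)^-1 v>.  For g > 0 the equation S (S y) + g y = v has a
   solution y_g (Banach fixed point theorem), and Q g = |S y_g|^2 + g |y_g|^2 is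
   nonincreasing in g with |S y_h - S y_g|^2 <= Q h - Q g for h <= g.  Hence if
   Q stays bounded as g -> 0, then S y_g is Cauchy and its limit w satisfies
   S w = v, because S (S y_g) = v - g y_g -> v; so Q -> +oo when v is not in
   the range of S.  If v = S x with x orthogonal to ker S, then
   Q g = <x, S y_g> <= |x|^2 and x - w lies in ker S, so Q g -> <x, w> = |x|^2.
   If v = S0 u, then r |S0 y|^2 <= |S y|^2 bounds Q by |u|^2 / r, so v lies in
   the range of S. *)

Set Implicit Arguments. Unset Strict Implicit.

Section InnerProduct.
Variables (R : realType) (V : completeNormedModType R) (ip : V -> V -> R).
Hypothesis hip : is_inner_product ip.

Lemma ipDZl a x y z : ip (a *: x + y) z = a * ip x z + ip y z.
Proof. by case: hip. Qed.

Lemma ipC x y : ip x y = ip y x.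
Proof. by case: hip. Qed.

Lemma ipxx x : ip x x = `|x| ^+ 2.
Proof. by case: hip. Qed.

Lemma ipxx_ge0 x : 0 <= ip x x.
Proof. by rewrite ipxx sqr_ge0. Qed.

Lemma ipDl x y z : ip (x + y) z = ip x z + ip y z.
Proof. by rewrite -[x]scale1r ipDZl mul1r scale1r. Qed.

Lemma ipBl x y z : ip (x - y) z = ip x z - ip y z.
Proof. by rewrite -scaleN1r addrC ipDZl mulN1r addrC. Qed.

Lemma ip0l z : ip 0 z = 0.
Proof. by have := ipBl 0 0 z; rewrite !subrr. Qed.

Lemma ipZl a x z : ip (a *: x) z = a * ip x z.
Proof. by rewrite -[a *: x]addr0 ipDZl ip0l addr0. Qed.

Lemma ipZr a x z : ip z (a *: x) = a * ip z x.
Proof. by rewrite ipC ipZl ipC. Qed.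

Lemma ipBr x y z : ip z (x - y) = ip z x - ip z y.
Proof. by rewrite ipC ipBl !(ipC z). Qed.

Lemma ip0r z : ip z 0 = 0.
Proof. by rewrite ipC ip0l. Qed.

Lemma ip_sqrB x y : ip (x - y) (x - y) = ip x x - 2 * ip x y + ip y y.
Proof. rewrite ipBl !ipBr (ipC y x); ring. Qed.

Lemma ip_sqr_le x y : ip x y ^+ 2 <= ip x x * ip y y.
Proof.
set a := ip x y; set b := ip y y.
have := ipxx_ge0 (b *: x - a *: y).
rewrite ip_sqrB !ipZl !ipZr -/a -/b => h.
have := ipxx_ge0 x; have := ipxx_ge0 y; rewrite -/b.
case: (ltrgt0P b) => // [b_gt0 _ _|b0 _ _]; first nra.
have y0 : y = 0 by apply/eqP; rewrite -normr_eq0 -sqrf_eq0 -ipxx -/b b0.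
by rewrite /a y0 ip0r expr0n /= b0 mulr0.
Qed.

Lemma normr_ip_le x y : `|ip x y| <= `|x| * `|y|.
Proof.
rewrite -(@ler_pXn2r R 2 isT) ?nnegrE ?mulr_ge0 // exprMn real_normK ?num_real //.
by rewrite -!ipxx ip_sqr_le.
Qed.

Lemma ip_cvgr {T : Type} (F : set_system T) {FF : Filter F} (f : T -> V) x w :
  f @ F --> w -> ip x (f t) @[t --> F] --> ip x w.
Proof.
move=> /cvgrPdist_lt fw; apply/cvgrPdist_lt => e e_gt0.
have x1_gt0 : 0 < `|x| + 1 by rewrite ltr_wpDl.
apply: filterS (fw _ (divr_gt0 e_gt0 x1_gt0)) => t /= ht.
rewrite -ipBr (le_lt_trans (normr_ip_le _ _)) //.
have : `|x| * `|w - f t| <= (`|x| + 1) * `|w - f t| by rewrite ler_wpM2r // lerDl.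
by move/le_lt_trans; apply; rewrite mulrC -ltr_pdivlMr.
Qed.

End InnerProduct.

Lemma continuous_linear_normr_le (R : realType) (V W : normedModType R)
    (f : {linear V -> W}) :
  continuous f -> exists2 M, 0 < M & forall x, `|f x| <= M * `|x|.
Proof. by move=> /linear_bounded_continuous /linear_boundedP /pinfty_ex_gt0. Qed.

Definition inv_succ (R : realType) (n : nat) : R := n.+1%:R^-1.

Lemma inv_succ_gt0 (R : realType) n : 0 < inv_succ R n.
Proof. by rewrite invr_gt0 ltr0Sn. Qed.

Lemma inv_succ_le (R : realType) n m : (n <= m)%N -> inv_succ R m <= inv_succ R n.
Proof. by move=> nm; rewrite lef_pV2 ?posrE ?ltr0Sn // ler_nat. Qed.

Section AntitoneAtRight0.
Variables (R : realType) (f : R -> R).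
Hypothesis f_antitone : forall h g, 0 < h -> h <= g -> f g <= f h.

Lemma antitone_cvg_at_right0 L : (forall g, 0 < g -> f g <= L) ->
  f (inv_succ R n) @[n --> \oo] --> L -> (f g)%:E @[g --> 0^'+] --> L%:E.
Proof.
move=> fL /cvgrPdist_lt fn; apply: cvg_EFin; first by near=> g.
apply/cvgrPdist_lt => e e_gt0; have [N _ hN] := fn e e_gt0.
near=> g.
have g_gt0 : 0 < g by near: g; exact: nbhs_right_gt.
have g_le : g <= inv_succ R N by near: g; exact: nbhs_right_le (inv_succ_gt0 R N).
have fgL := fL g g_gt0; have fNg := f_antitone g_gt0 g_le.
rewrite ger0_norm ?subr_ge0 //.
have := le_lt_trans (ler_norm _) (hN N (leqnn N)); rewrite /=; lra.
Unshelve. all: by end_near.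
Qed.

Lemma antitone_cvgey_at_right0 : ~ (exists B, forall n, f (inv_succ R n) <= B) ->
  (f g)%:E @[g --> 0^'+] --> +oo%E.
Proof.
move=> unbounded; apply/cvgeyPge => A.
have [n An] : exists n, A < f (inv_succ R n).
  apply/not_existsP => An; apply: unbounded; exists A => n.
  by rewrite leNgt; apply/negP/An.
near=> g.
have g_gt0 : 0 < g by near: g; exact: nbhs_right_gt.
have g_le : g <= inv_succ R n by near: g; exact: nbhs_right_le (inv_succ_gt0 R n).
by rewrite lee_fin (le_trans (ltW An)) // f_antitone.
Unshelve. all: by end_near.
Qed.

End AntitoneAtRight0.

Section Tikhonov.
Variables (R : realType) (V : completeNormedModType R) (ip : V -> V -> R).
Hypothesis hip : is_inner_product ip.
Variable S : {linear V -> V}.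
Hypotheses (S_cont : continuous S) (S_sa : self_adjoint ip S).

Lemma normr_scale_subSS_le K d : 0 <= K ->
    (forall y, ip (S y) (S y) <= K * ip y y) ->
  `|K *: d - S (S d)| <= K * `|d|.
Proof.
move=> K_ge0 SK.
rewrite -(@ler_pXn2r R 2 isT) ?nnegrE ?mulr_ge0 // exprMn -!(ipxx hip).
rewrite (ip_sqrB hip) !(ipZl hip) !(ipZr hip) -S_sa.
have := SK (S d); have := ipxx_ge0 hip d; have := ipxx_ge0 hip (S d); nra.
Qed.

Definition tikhonov (g : R) (y : V) : V := S (S y) + g *: y.

Lemma tikhonov_surj g v : 0 < g -> exists y, tikhonov g y = v.
Proof.
move=> g_gt0; have [M M_gt0 SM] := continuous_linear_normr_le S_cont.
pose K := M ^+ 2; pose c := K + g.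
have K_gt0 : 0 < K by rewrite exprn_gt0.
have c_gt0 : 0 < c by rewrite addr_gt0.
have SK y : ip (S y) (S y) <= K * ip y y.
  by rewrite !(ipxx hip) -exprMn (@ler_pXn2r R 2 isT) ?nnegrE ?mulr_ge0 ?(ltW M_gt0).
(* As 0 <= S S <= K, Phi is a K / c-contraction; its fixed points solve
   S (S y) + g y = v. *)
pose Phi y := c^-1 *: (v + (K *: y - S (S y))).
have Phi_lip a b : `|Phi a - Phi b| <= K / c * `|a - b|.
  have c_ge0 : 0 <= c^-1 by rewrite invr_ge0 ltW.
  rewrite -scalerBr opprD addrACA subrr add0r normrZ ger0_norm //.
  rewrite [K / c * _]mulrAC [K * _ / c]mulrC; apply: ler_wpM2l => //.
  have -> : K *: a - S (S a) - (K *: b - S (S b)) = K *: (a - b) - S (S (a - b)).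
    by rewrite !linearB /= addrACA.
  exact: normr_scale_subSS_le (ltW K_gt0) SK.
have Kc_ge0 : 0 <= K / c by rewrite divr_ge0 // ltW.
have [p _ Phi_p] : exists2 p, setT p & p = (totalfun Phi : {fun setT >-> setT}) p.
  apply: banach_fixed_point; last 2 first.
  - exact: closedT.
  - by exists 0.
  exists (NngNum Kc_ge0); split => /=; first by rewrite ltr_pdivrMr // mul1r ltrDl.
  by move=> [a b] _ /=; exact: Phi_lip.
exists p; have /addrI gp : K *: p + g *: p = K *: p + (v - S (S p)).
  by rewrite -scalerDl -/c {1}Phi_p /= scalerA mulfV ?gt_eqF // scale1r addrCA.
by rewrite /tikhonov gp addrC subrK.
Qed.

Variable v : V.

Definition tikhonov_sol g := xget 0 [set y | tikhonov g y = v].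

Definition tikhonov_quad g := quad_inv ip (tikhonov g) v.

Local Notation y_ := tikhonov_sol.
Local Notation Q := tikhonov_quad.

Lemma tikhonov_solP g : 0 < g -> tikhonov g (y_ g) = v.
Proof. by move=> g_gt0; apply: (xgetPex 0 (tikhonov_surj v g_gt0)). Qed.

Lemma tikhonov_quad_ip g : Q g = ip v (y_ g).
Proof. by []. Qed.

Lemma tikhonov_SS_sol g : 0 < g -> S (S (y_ g)) = v - g *: y_ g.
Proof. by move=> g_gt0; rewrite -{1}(tikhonov_solP g_gt0) addrK. Qed.

Lemma tikhonov_quad_cross h g : 0 < h ->
  Q g = ip (S (y_ h)) (S (y_ g)) + h * ip (y_ h) (y_ g).
Proof.
move=> h_gt0; rewrite tikhonov_quad_ip -{1}(tikhonov_solP h_gt0).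
by rewrite (ipDl hip) (ipZl hip) S_sa.
Qed.

Lemma tikhonov_quadE g : 0 < g ->
  Q g = ip (S (y_ g)) (S (y_ g)) + g * ip (y_ g) (y_ g).
Proof. exact: tikhonov_quad_cross. Qed.

Lemma tikhonov_quad_geS g : 0 < g -> ip (S (y_ g)) (S (y_ g)) <= Q g.
Proof.
move=> g_gt0; rewrite tikhonov_quadE // lerDl.
by rewrite mulr_ge0 ?(ltW g_gt0) ?(ipxx_ge0 hip).
Qed.

Lemma tikhonov_quad_ge_sol g : 0 < g -> g * ip (y_ g) (y_ g) <= Q g.
Proof. by move=> g_gt0; rewrite tikhonov_quadE // lerDr (ipxx_ge0 hip). Qed.

Lemma tikhonov_quad_distS h g : 0 < h -> h <= g ->
  ip (S (y_ h) - S (y_ g)) (S (y_ h) - S (y_ g)) <= Q h - Q g.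
Proof.
move=> h_gt0 hg; have g_gt0 : 0 < g by apply: lt_le_trans hg.
have := tikhonov_quadE h_gt0; have := tikhonov_quadE g_gt0.
have := tikhonov_quad_cross g h_gt0; have := tikhonov_quad_cross h g_gt0.
rewrite (ipC hip (S (y_ g))) (ipC hip (y_ g)) (ip_sqrB hip).
have := ipxx_ge0 hip (y_ h - y_ g); rewrite (ip_sqrB hip).
have := ipxx_ge0 hip (y_ g); nra.
Qed.

Lemma tikhonov_quad_antitone h g : 0 < h -> h <= g -> Q g <= Q h.
Proof.
move=> h_gt0 hg; have := tikhonov_quad_distS h_gt0 hg.
have := ipxx_ge0 hip (S (y_ h) - S (y_ g)); lra.
Qed.

Lemma tikhonov_quad_le_preimage (T : V -> V) c u g :
    self_adjoint ip T -> 0 < c -> (forall y, c * ip (T y) (T y) <= ip (S y) (S y)) ->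
  T u = v -> 0 < g -> Q g <= ip u u / c.
Proof.
move=> T_sa c_gt0 TS Tu g_gt0; rewrite ler_pdivlMr //.
have QE : Q g = ip u (T (y_ g)) by rewrite tikhonov_quad_ip -{1}Tu T_sa.
have := ipxx_ge0 hip (u - c *: T (y_ g)).
rewrite (ip_sqrB hip) !(ipZl hip) !(ipZr hip) -QE.
have := TS (y_ g); have := tikhonov_quad_geS g_gt0; have := ipxx_ge0 hip (T (y_ g)).
nra.
Qed.

Lemma tikhonov_quad_le_preimageS x g : S x = v -> 0 < g -> Q g <= ip x x.
Proof.
move=> Sx g_gt0; rewrite -[ip x x]divr1.
by apply: (tikhonov_quad_le_preimage S_sa ltr01) => // y; rewrite mul1r.
Qed.

Section BoundedQuad.
Variable B : R.
Hypothesis QB : forall n, Q (inv_succ R n) <= B.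

Lemma tikhonov_S_cvg : cvgn (fun n => S (y_ (inv_succ R n))).
Proof.
pose u n := Q (inv_succ R n); pose w n := S (y_ (inv_succ R n)).
have u_cvg : cvgn u.
  apply/cvg_ex; exists (sup (range u)); apply: nondecreasing_cvgn.
    by move=> n m nm; exact: tikhonov_quad_antitone (inv_succ_gt0 R m) (inv_succ_le R nm).
  by exists B => _ [n _ <-]; apply: QB.
have w_dist n m : `|w n - w m| ^+ 2 <= `|u n - u m|.
  wlog nm : n m / (n <= m)%N.
    by move=> W; case/orP: (leq_total n m) => /W //; rewrite distrC (distrC (u n)).
  rewrite distrC -(ipxx hip).
  rewrite (le_trans (tikhonov_quad_distS (inv_succ_gt0 R m) (inv_succ_le R nm))) //.
  by rewrite distrC ler_norm.
have u_cauchy : cauchy_ball (u @ \oo) by apply/cauchy_ballP; apply: cvg_cauchy.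
apply/cauchy_cvgP/cauchy_ballP => e e_gt0.
have := u_cauchy _ (exprn_gt0 2 e_gt0).
near_simpl; apply: filterS => -[n m] /=.
rewrite -!ball_normE /= => /(le_lt_trans (w_dist n m)).
by rewrite (@ltr_pXn2r R 2 isT) ?nnegrE // ltW.
Qed.

Lemma tikhonov_SS_cvg : S (S (y_ (inv_succ R n))) @[n --> \oo] --> v.
Proof.
have B_ge0 : 0 <= B.
  apply: le_trans (QB 0); apply: le_trans (tikhonov_quad_geS (inv_succ_gt0 R 0)).
  exact: ipxx_ge0.
apply/cvgrPdist_lt => e e_gt0.
have eB_gt0 : 0 < e ^+ 2 / (B + 1) by rewrite divr_gt0 ?exprn_gt0 // ltr_wpDl.
apply: filterS (near_infty_natSinv_lt (PosNum eB_gt0)) => n /= gn_lt.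
have g_gt0 := inv_succ_gt0 R n; set g := inv_succ R n in g_gt0 gn_lt *.
rewrite tikhonov_SS_sol // opprB addrCA subrr addr0.
rewrite -(@ltr_pXn2r R 2 isT) ?nnegrE ?(ltW e_gt0) // -(ipxx hip) (ipZl hip) (ipZr hip).
have : g * (g * ip (y_ g) (y_ g)) <= g * B.
  by rewrite ler_pM2l //; exact: le_trans (tikhonov_quad_ge_sol g_gt0) (QB n).
have : g * (B + 1) < e ^+ 2 by rewrite -ltr_pdivlMr // ltr_wpDl.
nra.
Qed.

Lemma tikhonov_range : S (limn (fun n => S (y_ (inv_succ R n)))) = v.
Proof.
apply: (cvg_unique (@norm_hausdorff R V) _ tikhonov_SS_cvg).
by apply: cvg_comp tikhonov_S_cvg _; apply: S_cont.
Qed.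

End BoundedQuad.

Lemma tikhonov_quad_bounded_range :
  (exists B, forall n, Q (inv_succ R n) <= B) -> exists w, S w = v.
Proof. by move=> [B QB]; eexists; exact: tikhonov_range QB. Qed.

Lemma tikhonov_quad_cvg_preimage x : S x = v -> (forall z, S z = 0 -> ip x z = 0) ->
  Q (inv_succ R n) @[n --> \oo] --> ip x x.
Proof.
move=> Sx x_perp.
have QB n : Q (inv_succ R n) <= ip x x.
  exact: tikhonov_quad_le_preimageS Sx (inv_succ_gt0 R n).
have xw : ip x (limn (fun n => S (y_ (inv_succ R n)))) = ip x x.
  apply/eqP; rewrite eq_sym -subr_eq0 -(ipBr hip); apply/eqP/x_perp.
  by rewrite linearB /= Sx (tikhonov_range QB) subrr.
have -> : (fun n => Q (inv_succ R n)) = (fun n => ip x (S (y_ (inv_succ R n)))).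
  by apply: funext => n; rewrite tikhonov_quad_ip -Sx S_sa.
by rewrite -xw; apply: (ip_cvgr hip); exact: tikhonov_S_cvg QB.
Qed.

End Tikhonov.

Unset Implicit Arguments. Set Strict Implicit.

Theorem proposition4 (R : realType) (V : completeNormedModType R)
  (ip : V -> V -> R) (r : R) (m m0 : V) (C C0 S S0 : V -> V) :
  is_inner_product ip -> separable V ->
  0 < r -> r < 1 ->
  compact_op C -> self_adjoint ip C -> positive_op ip C ->
  compact_op C0 -> self_adjoint ip C0 -> positive_op ip C0 ->
  is_pos_sqrt ip (fun x => (1 - r) *: C x + r *: C0 x) S ->
  is_pos_sqrt ip C0 S0 ->
  [/\ (forall x : V, S x = m - m0 -> (forall z, S z = 0 -> ip x z = 0) ->
         (fun g : R => (quad_inv ip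
            (fun y => (1 - r) *: (C y + g *: y) + r *: (C0 y + g *: y))
            (m - m0))%:E)
           @ 0^'+ --> (ip x x)%:E),
      (~ (exists x : V, S x = m - m0) ->
         (fun g : R => (quad_inv ip
            (fun y => (1 - r) *: (C y + g *: y) + r *: (C0 y + g *: y))
            (m - m0))%:E)
           @ 0^'+ --> +oo%E)
    & ((exists x : V, S0 x = m - m0) -> exists x : V, S x = m - m0)].
Proof.
move=> hip _ r_gt0 r_lt1 _ _ C_pos _ _ _ [S_lin S_cont S_sa _ SS] [_ _ S0_sa _ S0S0].
pose Sl : {linear V -> V} := HB.pack S (GRing.isLinear.Build _ _ _ _ _ S_lin).
have Sl_cont : continuous Sl := S_cont.
have Sl_sa : self_adjoint ip Sl := S_sa.
set v := m - m0; set Q := tikhonov_quad ip Sl v.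
have -> : (fun g => (quad_inv ip
    (fun y => (1 - r) *: (C y + g *: y) + r *: (C0 y + g *: y)) v)%:E) =
    (fun g => (Q g)%:E).
  apply: funext => g; congr (quad_inv _ _ _)%:E; apply: funext => y.
  by rewrite /tikhonov /= SS !scalerDr addrACA -scalerDl subrK scale1r.
have Q_antitone : forall h g, 0 < h -> h <= g -> Q g <= Q h :=
  tikhonov_quad_antitone hip Sl_cont Sl_sa v.
split.
- move=> x Sx x_perp; apply: (antitone_cvg_at_right0 Q_antitone).
    by move=> g; exact: (tikhonov_quad_le_preimageS hip Sl_cont Sl_sa Sx).
  exact: (tikhonov_quad_cvg_preimage hip Sl_cont Sl_sa Sx x_perp).
- move=> v_notin; apply: (antitone_cvgey_at_right0 Q_antitone) => Q_bounded.
  exact/v_notin/(tikhonov_quad_bounded_range hip Sl_cont Sl_sa Q_bounded).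
- move=> [u S0u]; apply: (tikhonov_quad_bounded_range hip Sl_cont Sl_sa).
  have S0_le y : r * ip (S0 y) (S0 y) <= ip (S y) (S y).
    rewrite -S0_sa S0S0 -S_sa SS (ipDl hip) !(ipZl hip) lerDr mulr_ge0 //.
    by rewrite subr_ge0 ltW.
  exists (ip u u / r) => n; have n_gt0 := inv_succ_gt0 R n.
  exact: (tikhonov_quad_le_preimage hip Sl_cont Sl_sa S0_sa r_gt0 S0_le S0u n_gt0).
Qed.
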